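(* Let $\mathbf X\in\mathbb R^{n\times p}$, $\boldsymbol\beta\in\mathbb R^p$ with support $S=\{j:\beta_j\neq0\}$, $\sigma>0$, and let $\check{\boldsymbol\beta}\in\mathbb R^p$ satisfy $\mathrm{sgn}(\check{\boldsymbol\beta})=\mathrm{sgn}(\boldsymbol\beta)$ componentwise. For $t\in[0,1)$ and $\lambda>0$ let $\Lambda_{\lambda,t}$ be the set of $\boldsymbol\zeta\in\mathbb R^n$ for which there is a Lasso solution $\hat{\boldsymbol\beta}=\hat{\boldsymbol\beta}_\lambda(\boldsymbol\beta,\sigma\boldsymbol\zeta)$ with $\mathrm{sgn}(\hat{\boldsymbol\beta}_S)=\mathrm{sgn}(\boldsymbol\beta_S)$ and $\min_{j\in S}\hat\beta_j/\beta_j>t$. Suppose $\check\sigma>0$ satisfies $$0<\check\sigma/\sigma<\min_{j\in S}\frac{\check\beta_j}{(1-t)\beta_j}.$$ Then for every $\boldsymbol\zeta\in\Lambda_{\lambda,t}$ for which the residuals below are well-defined (nonzero denominators), $\hat{\mathbf R}_\lambda(\boldsymbol\beta,\sigma\boldsymbol\zeta)=\hat{\mathbf R}_\lambda(\check{\boldsymbol\beta},\check\sigma\boldsymbol\zeta)$.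
   Context: For $\mathbf b_0\in\mathbb R^p$, $\mathbf w\in\mathbb R^n$ and $\lambda>0$, a (square-root) Lasso solution is any $\hat{\boldsymbol\beta}_\lambda(\mathbf b_0,\mathbf w)\in\arg\min_{\mathbf b\in\mathbb R^p}\{\|\mathbf X(\mathbf b_0-\mathbf b)+\mathbf w\|_2/\sqrt n+\lambda\|\mathbf b\|_1\}$, i.e. a square-root Lasso fit of the response $\mathbf X\mathbf b_0+\mathbf w$ on $\mathbf X$; the fitted values $\mathbf X\hat{\boldsymbol\beta}_\lambda$ are unique even if the minimiser is not. The scaled Lasso residuals are $\hat{\mathbf R}_\lambda(\mathbf b_0,\mathbf w)=\{\mathbf X(\mathbf b_0-\hat{\boldsymbol\beta}_\lambda(\mathbf b_0,\mathbf w))+\mathbf w\}/\|\mathbf X(\mathbf b_0-\hat{\boldsymbol\beta}_\lambda(\mathbf b_0,\mathbf w))+\mathbf w\|_2$. For a vector $\mathbf b$ and $A\subseteq\{1,\dots,p\}$, $\mathbf b_A$ is the subvector indexed by $A$; $\mathrm{sgn}$ is applied componentwise. *)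

From HB Require Import structures.
From mathcomp Require Import all_boot all_order all_algebra.
Set Implicit Arguments. Unset Strict Implicit. Unset Printing Implicit Defensive.
Import Order.TTheory GRing.Theory Num.Theory.
Local Open Scope ring_scope.

Definition norm2 (R : rcfType) (m : nat) (v : 'cV[R]_m) : R :=
  Num.sqrt (\sum_(i < m) (v i 0) ^+ 2).

Definition norm1 (R : rcfType) (m : nat) (v : 'cV[R]_m) : R :=
  \sum_(i < m) `|v i 0|.

Definition sqlasso_obj (R : rcfType) (n p : nat) (X : 'M[R]_(n, p))
    (lam : R) (b0 : 'cV[R]_p) (w : 'cV[R]_n) (b : 'cV[R]_p) : R :=
  norm2 (X *m (b0 - b) + w) / Num.sqrt (n%:R) + lam * norm1 b.

Definition is_lasso_sol (R : rcfType) (n p : nat) (X : 'M[R]_(n, p))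
    (lam : R) (b0 : 'cV[R]_p) (w : 'cV[R]_n) (bh : 'cV[R]_p) : Prop :=
  forall b : 'cV[R]_p, sqlasso_obj X lam b0 w bh <= sqlasso_obj X lam b0 w b.

Definition lasso_res (R : rcfType) (n p : nat) (X : 'M[R]_(n, p))
    (b0 : 'cV[R]_p) (w : 'cV[R]_n) (bh : 'cV[R]_p) : 'cV[R]_n :=
  X *m (b0 - bh) + w.

Definition scaled_res (R : rcfType) (n p : nat) (X : 'M[R]_(n, p))
    (b0 : 'cV[R]_p) (w : 'cV[R]_n) (bh : 'cV[R]_p) : 'cV[R]_n :=
  (norm2 (lasso_res X b0 w bh))^-1 *: lasso_res X b0 w bh.

Definition in_Lambda (R : rcfType) (n p : nat) (X : 'M[R]_(n, p))
    (beta : 'cV[R]_p) (sigma lam t : R) (zeta : 'cV[R]_n) : Prop :=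
  exists bh : 'cV[R]_p,
    is_lasso_sol X lam beta (sigma *: zeta) bh /\
    (forall j : 'I_p, beta j 0 != 0 -> Num.sg (bh j 0) = Num.sg (beta j 0)) /\
    (forall j : 'I_p, beta j 0 != 0 -> t < bh j 0 / beta j 0).

From HB Require Import structures.
From mathcomp Require Import all_boot all_order all_algebra.
From mathcomp Require Import ring lra.
Import Order.TTheory GRing.Theory Num.Theory.
Local Open Scope ring_scope.
Set Implicit Arguments. Unset Strict Implicit. Unset Printing Implicit Defensive.

(* Put [c = sigmac / sigma] and [tr y = betac - c (beta - y)].  The residual of
   [tr y] for the data [(betac, sigmac zeta)] is [c] times the residual of [y]
   for [(beta, sigma zeta)]; and as long as every [y_j / beta_j] exceeds [t],
   the ratio condition keeps the coordinates of [tr y] on the side of [betac_j],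
   so the objective of [tr y] is [c] times that of [y] plus a constant.  Hence
   [tr] maps the Lasso solution given by [zeta \in Lambda] to a local, and by
   convexity global, solution of the second problem with proportional
   residuals.  Finally, the scaled residual is the same for all solutions: the
   midpoint of two solutions is a solution, which forces equality in the
   triangle inequality for their residuals. *)

Section EuclideanNorm.
Variables (R : rcfType) (m : nat).
Implicit Types (u v : 'cV[R]_m) (a b : R).

Definition dotv u v : R := \sum_(i < m) u i 0 * v i 0.

Lemma dotvv_ge0 u : 0 <= dotv u u.
Proof. by apply: sumr_ge0 => i _; rewrite -expr2 sqr_ge0. Qed.

Lemma dotvv_eq0 u : dotv u u = 0 -> u = 0.
Proof.
move=> /eqP; rewrite psumr_eq0 => [/allP uu0|i _]; last by rewrite -expr2 sqr_ge0.
apply/matrixP => i j; rewrite (ord1 j) mxE.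
by have /implyP/(_ isT) := uu0 i (mem_index_enum i); rewrite mulf_eq0 orbb => /eqP.
Qed.

Lemma dotv_scaleD a b u v :
  dotv (a *: u + b *: v) (a *: u + b *: v) =
  a ^+ 2 * dotv u u + 2 * a * b * dotv u v + b ^+ 2 * dotv v v.
Proof.
rewrite /dotv !mulr_sumr -!big_split /=; apply: eq_bigr => i _; rewrite !mxE; ring.
Qed.

Lemma norm2_ge0 u : 0 <= norm2 u.
Proof. exact: sqrtr_ge0. Qed.

Lemma sqr_norm2 u : norm2 u ^+ 2 = dotv u u.
Proof.
rewrite /norm2 sqr_sqrtr; last by apply: sumr_ge0 => i _; rewrite sqr_ge0.
by apply: eq_bigr => i _; rewrite expr2.
Qed.

Lemma norm2_eq0 u : norm2 u = 0 -> u = 0.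
Proof. by move=> u0; apply: dotvv_eq0; rewrite -sqr_norm2 u0 expr0n. Qed.

Lemma norm2Z a u : norm2 (a *: u) = `|a| * norm2 u.
Proof.
rewrite /norm2 -sqrtr_sqr -sqrtrM ?sqr_ge0 // mulr_sumr.
by congr Num.sqrt; apply: eq_bigr => i _; rewrite mxE exprMn.
Qed.

Lemma sqr_norm2D u v :
  norm2 (u + v) ^+ 2 = norm2 u ^+ 2 + 2 * dotv u v + norm2 v ^+ 2.
Proof. by rewrite !sqr_norm2 -(scale1r u) -(scale1r v) dotv_scaleD !scale1r; ring. Qed.

(* Expanding [dotv w w >= 0] for [w = |v| u - |u| v]. *)
Lemma cauchy_schwarz u v : dotv u v <= norm2 u * norm2 v.
Proof.
have [u0|u_neq0] := eqVneq (norm2 u) 0.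
  by rewrite u0 (norm2_eq0 u0) mul0r /dotv big1 // => i _; rewrite mxE mul0r.
have [v0|v_neq0] := eqVneq (norm2 v) 0.
  by rewrite v0 (norm2_eq0 v0) mulr0 /dotv big1 // => i _; rewrite mxE mulr0.
have uv_gt0 : 0 < norm2 u * norm2 v by rewrite mulr_gt0 // lt_def ?u_neq0 ?v_neq0 norm2_ge0.
have := dotvv_ge0 (norm2 v *: u + (- norm2 u) *: v).
rewrite dotv_scaleD -!sqr_norm2; nra.
Qed.

Lemma norm2D u v : norm2 (u + v) <= norm2 u + norm2 v.
Proof.
have := sqr_norm2D u v; have := cauchy_schwarz u v.
have := norm2_ge0 u; have := norm2_ge0 v; have := norm2_ge0 (u + v); nra.
Qed.

Lemma norm2D_eq u v :
  norm2 u + norm2 v <= norm2 (u + v) -> norm2 v *: u = norm2 u *: v.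
Proof.
move=> uv_le.
have uv_eq : norm2 (u + v) = norm2 u + norm2 v.
  by apply/eqP; rewrite eq_le uv_le norm2D.
have uv_dot : dotv u v = norm2 u * norm2 v.
  by have := sqr_norm2D u v; rewrite uv_eq; nra.
have /dotvv_eq0 w0 : dotv (norm2 v *: u + (- norm2 u) *: v)
                          (norm2 v *: u + (- norm2 u) *: v) = 0.
  by rewrite dotv_scaleD -!sqr_norm2 uv_dot; ring.
by apply/eqP; rewrite -subr_eq0 -scaleNr w0.
Qed.

Lemma normalized_eq_of_norm2D u v : norm2 u != 0 -> norm2 v != 0 ->
  norm2 u + norm2 v <= norm2 (u + v) ->
  (norm2 u)^-1 *: u = (norm2 v)^-1 *: v.
Proof.
move=> u0 v0 /norm2D_eq uv.
apply: (scalerI v0); rewrite !scalerA divff // mulrC -scalerA uv.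
by rewrite scalerA mulVf.
Qed.

End EuclideanNorm.

Lemma sqrt_dim_gt0 (R : rcfType) (n : nat) (v : 'cV[R]_n) :
  norm2 v != 0 -> 0 < Num.sqrt (n%:R : R).
Proof.
by case: n v => [|n] v; rewrite /norm2 ?big_ord0 ?sqrtr0 ?eqxx // sqrtr_gt0 ltr0n.
Qed.

Section SqrtLasso.
Variables (R : rcfType) (n p : nat) (X : 'M[R]_(n, p)) (lam : R).
Hypothesis lam_ge0 : 0 <= lam.
Variables (b0 : 'cV[R]_p) (w : 'cV[R]_n).
Implicit Types (x y b : 'cV[R]_p) (s : R).

Local Notation obj := (sqlasso_obj X lam b0 w).
Local Notation res := (lasso_res X b0 w).
Local Notation sol := (is_lasso_sol X lam b0 w).

Lemma sqlasso_objE b : obj b = norm2 (res b) / Num.sqrt n%:R + lam * norm1 b.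
Proof. by []. Qed.

Lemma lasso_res_comb s x y : res ((1 - s) *: x + s *: y) = (1 - s) *: res x + s *: res y.
Proof.
rewrite /lasso_res.
have -> : b0 - ((1 - s) *: x + s *: y) = (1 - s) *: (b0 - x) + s *: (b0 - y).
  by apply/matrixP => i j; rewrite !mxE; ring.
rewrite mulmxDr -!scalemxAr.
by apply/matrixP => i j; rewrite !mxE; ring.
Qed.

Lemma norm1_comb s x y : 0 <= s <= 1 ->
  norm1 ((1 - s) *: x + s *: y) <= (1 - s) * norm1 x + s * norm1 y.
Proof.
case/andP=> s_ge0 s_le1; rewrite /norm1 !mulr_sumr -big_split /=.
apply: ler_sum => i _; rewrite !mxE; apply: le_trans (ler_normD _ _) _.
by rewrite !normrM (ger0_norm s_ge0) ger0_norm // subr_ge0.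
Qed.

Lemma sqlasso_obj_comb s x y : 0 <= s <= 1 ->
  obj ((1 - s) *: x + s *: y) <= (1 - s) * obj x + s * obj y.
Proof.
move=> s01; have /andP[s_ge0 s_le1] := s01.
have res_le : norm2 (res ((1 - s) *: x + s *: y)) <=
              (1 - s) * norm2 (res x) + s * norm2 (res y).
  rewrite lasso_res_comb; apply: le_trans (norm2D _ _) _.
  by rewrite !norm2Z (ger0_norm s_ge0) ger0_norm // subr_ge0.
have k_ge0 : 0 <= (Num.sqrt (n%:R : R))^-1 by rewrite invr_ge0 sqrtr_ge0.
rewrite !sqlasso_objE.
apply: le_trans (lerD (ler_wpM2r k_ge0 res_le) (ler_wpM2l lam_ge0 (norm1_comb x y s01))) _.
lra.
Qed.

Lemma is_lasso_sol_comb s x y : 0 <= s <= 1 -> sol x -> sol y ->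
  sol ((1 - s) *: x + s *: y).
Proof.
move=> s01 x_sol y_sol b; apply: le_trans (sqlasso_obj_comb x y s01) _.
have /andP[s_ge0 s_le1] := s01; have := x_sol b; have := y_sol b; nra.
Qed.

Lemma scaled_res_unique x y : sol x -> sol y ->
  norm2 (res x) != 0 -> norm2 (res y) != 0 ->
  scaled_res X b0 w x = scaled_res X b0 w y.
Proof.
move=> x_sol y_sol rx0 ry0.
have h01 : 0 <= (2^-1 : R) <= 1 by apply/andP; split; lra.
have h_half : 1 - 2^-1 = 2^-1 :> R by field.
have m_sol := is_lasso_sol_comb h01 x_sol y_sol.
have := norm1_comb x y h01; have := m_sol x; have := x_sol y; have := y_sol x.
have := x_sol ((1 - 2^-1) *: x + 2^-1 *: y).
rewrite !sqlasso_objE lasso_res_comb h_half -scalerDr norm2Z ger0_norm; last lra.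
have k_gt0 : 0 < (Num.sqrt (n%:R : R))^-1 by rewrite invr_gt0 (sqrt_dim_gt0 rx0).
move: k_gt0; set k := (Num.sqrt _)^-1.
set S := norm2 (res x + res y); set Nx := norm2 (res x); set Ny := norm2 (res y).
move=> k_gt0 x_le_m y_le_x x_le_y m_le_x norm1_m.
have : (Nx + Ny) * k <= S * k by have := ler_wpM2l lam_ge0 norm1_m; nra.
rewrite ler_pM2r // => le_sum.
exact: normalized_eq_of_norm2D.
Qed.

End SqrtLasso.

Lemma segment_min_is_min (R : realFieldType) (V : lmodType R) (f : V -> R) (a : V) :
  (forall x s, 0 <= s <= 1 -> f ((1 - s) *: a + s *: x) <= (1 - s) * f a + s * f x) ->
  (forall x, exists2 s, 0 < s <= 1 & f a <= f ((1 - s) *: a + s *: x)) ->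
  forall x, f a <= f x.
Proof.
move=> f_conv a_min x; have [s /andP[s_gt0 s_le1] a_le] := a_min x.
have := f_conv x s; rewrite ltW ?s_le1 // => /(_ isT) fs_le.
by rewrite -(ler_pM2l s_gt0); nra.
Qed.

Definition ratio_gt (R : realFieldType) (p : nat) (beta : 'cV[R]_p) (t : R) (y : 'cV[R]_p) :=
  forall j : 'I_p, beta j 0 != 0 -> t < y j 0 / beta j 0.

(* With [s = 1 / (1 + T)], the drift [s d_j] of each ratio stays above
   [- a_j], where [a_j] is the slack of [y]. *)
Lemma ratio_gt_comb (R : realFieldType) (p : nat) (beta : 'cV[R]_p) (t : R)
    (y y' : 'cV[R]_p) :
  ratio_gt beta t y -> exists2 s, 0 < s <= 1 & ratio_gt beta t ((1 - s) *: y + s *: y').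
Proof.
move=> y_gt.
pose a j := y j 0 / beta j 0 - t.
pose d j := y' j 0 / beta j 0 - y j 0 / beta j 0.
have a_gt0 j : beta j 0 != 0 -> 0 < a j by move=> bj; rewrite subr_gt0 y_gt.
have term_ge0 j : beta j 0 != 0 -> 0 <= (`|d j| + 1) / a j.
  by move=> bj; apply: divr_ge0; [rewrite addr_ge0 | exact/ltW/a_gt0].
pose T := \sum_(j | beta j 0 != 0) (`|d j| + 1) / a j.
have T_ge0 : 0 <= T by apply: sumr_ge0.
exists (1 + T)^-1; first by rewrite invr_gt0 invf_le1; lra.
move=> j bj; rewrite !mxE.
have term_le : (`|d j| + 1) / a j <= T.
  by rewrite /T (bigD1 j) //= lerDl; apply: sumr_ge0 => k /andP[/term_ge0].
have d_le : `|d j| + 1 <= T * a j by rewrite -ler_pdivrMr ?a_gt0.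
have slack : 0 < a j * (1 + T) + d j.
  by have := ler_norm (- d j); rewrite normrN; have := a_gt0 j bj; lra.
have -> : ((1 - (1 + T)^-1) * y j 0 + (1 + T)^-1 * y' j 0) / beta j 0 =
          t + a j + (1 + T)^-1 * d j by rewrite /a /d; field; lra.
have : 0 < (1 + T)^-1 * (a j * (1 + T) + d j) by rewrite mulr_gt0 // invr_gt0; lra.
by rewrite mulrDr mulrCA mulVf ?mulr1; lra.
Qed.

Definition transport (R : rcfType) (p : nat) (beta betac : 'cV[R]_p) (c : R)
    (y : 'cV[R]_p) : 'cV[R]_p :=
  betac - c *: (beta - y).

(* With [0 <= t < 1], the hypotheses put [bj], [yj], [bcj] and
   [bcj - c (bj - yj)] on the same side of 0. *)
Lemma norm_transport_coord (R : realFieldType) (bj bcj yj c t : R) :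
  0 <= t -> t < 1 -> 0 < c -> (bj != 0 -> c < bcj / ((1 - t) * bj)) -> t < yj / bj ->
  `|bcj - c * (bj - yj)| = c * `|yj| + (`|bcj| - c * `|bj|).
Proof.
move=> t_ge0 t_lt1 c_gt0.
case: (ltgtP bj 0) => [bj_lt0|bj_gt0|->].
- have tb_lt0 : (1 - t) * bj < 0 by rewrite pmulr_rlt0 // subr_gt0.
  rewrite !ltr_ndivlMr // => /(_ isT) bcj_lt yj_lt.
  have yj_lt0 : yj < 0 by nra.
  have bcj_lt0 : bcj < 0 by nra.
  rewrite !ltr0_norm //; first ring.
  nra.
- have tb_gt0 : 0 < (1 - t) * bj by rewrite pmulr_rgt0 // subr_gt0.
  rewrite !ltr_pdivlMr // => /(_ isT) bcj_gt yj_gt.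
  have yj_gt0 : 0 < yj by nra.
  have bcj_gt0 : 0 < bcj by nra.
  rewrite !gtr0_norm //; first ring.
  nra.
- by rewrite invr0 !mulr0 => _ /(le_lt_trans t_ge0); rewrite ltxx.
Qed.

Section Transport.
Variables (R : rcfType) (p : nat) (beta betac : 'cV[R]_p) (c : R).
Implicit Types (y : 'cV[R]_p) (s : R).

Local Notation tr := (transport beta betac c).

Lemma lasso_res_transport n (X : 'M[R]_(n, p)) (w : 'cV[R]_n) y :
  lasso_res X betac (c *: w) (tr y) = c *: lasso_res X beta w y.
Proof.
by rewrite /lasso_res /transport opprB subrKC -scalemxAr scalerDr.
Qed.

Lemma transport_comb s y y' : tr ((1 - s) *: y + s *: y') = (1 - s) *: tr y + s *: tr y'.
Proof. by apply/matrixP => i j; rewrite !mxE; ring. Qed.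

Lemma transportKV x : c != 0 -> tr (beta - c^-1 *: (betac - x)) = x.
Proof. by move=> c0; apply/matrixP => i j; rewrite !mxE; field. Qed.

Lemma scaled_res_transport n (X : 'M[R]_(n, p)) (w : 'cV[R]_n) y : 0 < c ->
  norm2 (lasso_res X beta w y) != 0 ->
  scaled_res X betac (c *: w) (tr y) = scaled_res X beta w y.
Proof.
move=> c_gt0 r0; rewrite /scaled_res lasso_res_transport norm2Z gtr0_norm //.
by rewrite scalerA invfM mulrAC mulVf ?gt_eqF // mul1r.
Qed.

End Transport.

Section TransportSolution.
Variables (R : rcfType) (n p : nat) (X : 'M[R]_(n, p)) (lam : R).
Variables (beta betac : 'cV[R]_p) (c t : R) (w : 'cV[R]_n).
Hypotheses (lam_ge0 : 0 <= lam) (t_ge0 : 0 <= t) (t_lt1 : t < 1) (c_gt0 : 0 < c).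
Hypothesis sg_betac : forall j, Num.sg (betac j 0) = Num.sg (beta j 0).
Hypothesis c_lt_ratio : forall j, beta j 0 != 0 -> c < betac j 0 / ((1 - t) * beta j 0).

Local Notation tr := (transport beta betac c).

Lemma norm1_transport y : ratio_gt beta t y ->
  norm1 (tr y) = c * norm1 y + \sum_(j < p) (`|betac j 0| - c * `|beta j 0|).
Proof.
move=> y_gt; rewrite /norm1 mulr_sumr -big_split /=; apply: eq_bigr => j _.
rewrite !mxE; have [bj0|bj_neq0] := eqVneq (beta j 0) 0.
  have bcj0 : betac j 0 = 0 by apply/eqP; rewrite -sgr_eq0 sg_betac bj0 sgr0.
  by rewrite bj0 bcj0 !normr0 !sub0r mulr0 subr0 normrN normrM normrN gtr0_norm.
exact: norm_transport_coord (@c_lt_ratio j) (y_gt j bj_neq0).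
Qed.

Lemma sqlasso_obj_transport y : ratio_gt beta t y ->
  sqlasso_obj X lam betac (c *: w) (tr y) =
  c * sqlasso_obj X lam beta w y + lam * \sum_(j < p) (`|betac j 0| - c * `|beta j 0|).
Proof.
move=> y_gt; rewrite !sqlasso_objE lasso_res_transport norm2Z gtr0_norm //.
by rewrite norm1_transport //; ring.
Qed.

(* [tr B] minimises the transported objective along every segment leaving it,
   because nearby points are still images of points satisfying [ratio_gt]. *)
Lemma transport_is_lasso_sol B : ratio_gt beta t B ->
  is_lasso_sol X lam beta w B -> is_lasso_sol X lam betac (c *: w) (tr B).
Proof.
move=> B_gt B_sol; apply: segment_min_is_min => [x s s01|x].
  exact: sqlasso_obj_comb.
have c_neq0 : c != 0 by rewrite gt_eqF.
have [s s01 Bs_gt] := ratio_gt_comb (beta - c^-1 *: (betac - x)) B_gt.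
exists s => //; rewrite -(transportKV beta betac x c_neq0) -transport_comb.
rewrite !sqlasso_obj_transport // lerD2r ler_pM2l //; exact: B_sol.
Qed.

End TransportSolution.

(* If [bh] has zero residual, a small step towards [x] gives a solution whose
   residual is a positive multiple of that of [x]. *)
Lemma exists_ratio_gt_lasso_sol_res_neq0 (R : rcfType) (n p : nat)
    (X : 'M[R]_(n, p)) (lam t : R) (beta : 'cV[R]_p) (w : 'cV[R]_n) (bh x : 'cV[R]_p) :
  0 <= lam -> is_lasso_sol X lam beta w bh -> ratio_gt beta t bh ->
  is_lasso_sol X lam beta w x -> norm2 (lasso_res X beta w x) != 0 ->
  exists B, [/\ ratio_gt beta t B, is_lasso_sol X lam beta w B &
                norm2 (lasso_res X beta w B) != 0].
Proof.
move=> lam_ge0 bh_sol bh_gt x_sol rx_neq0.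
have [rbh0|rbh_neq0] := eqVneq (norm2 (lasso_res X beta w bh)) 0; last by exists bh.
have [s /andP[s_gt0 s_le1] Bs_gt] := ratio_gt_comb x bh_gt.
exists ((1 - s) *: bh + s *: x); split=> //.
  by apply: is_lasso_sol_comb; rewrite ?(ltW s_gt0).
rewrite lasso_res_comb (norm2_eq0 rbh0) scaler0 add0r norm2Z gtr0_norm //.
by rewrite mulf_eq0 negb_or gt_eqF.
Qed.

Unset Implicit Arguments.

Theorem theorem1 (R : rcfType) (n p : nat) (X : 'M[R]_(n, p))
    (beta betac : 'cV[R]_p) (sigma sigmac lam t : R)
    (hsigma : 0 < sigma) (hlam : 0 < lam) (ht0 : 0 <= t) (ht1 : t < 1)
    (hsgn : forall j : 'I_p, Num.sg (betac j 0) = Num.sg (beta j 0))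
    (hsigmac : 0 < sigmac)
    (hratio0 : 0 < sigmac / sigma)
    (hratio : forall j : 'I_p, beta j 0 != 0 ->
        sigmac / sigma < betac j 0 / ((1 - t) * beta j 0))
    (zeta : 'cV[R]_n)
    (hzeta : in_Lambda X beta sigma lam t zeta) :
  forall bh1 bh2 : 'cV[R]_p,
    is_lasso_sol X lam beta (sigma *: zeta) bh1 ->
    is_lasso_sol X lam betac (sigmac *: zeta) bh2 ->
    norm2 (lasso_res X beta (sigma *: zeta) bh1) != 0 ->
    norm2 (lasso_res X betac (sigmac *: zeta) bh2) != 0 ->
    scaled_res X beta (sigma *: zeta) bh1 = scaled_res X betac (sigmac *: zeta) bh2.
Proof.
move=> bh1 bh2 bh1_sol bh2_sol r1_neq0 r2_neq0.
have lam_ge0 := ltW hlam.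
have w_eq : sigmac *: zeta = (sigmac / sigma) *: (sigma *: zeta).
  by rewrite scalerA mulfVK ?gt_eqF.
have [bh [bh_sol [_ bh_gt]]] := hzeta.
have [B [B_gt B_sol rB_neq0]] :=
  exists_ratio_gt_lasso_sol_res_neq0 lam_ge0 bh_sol bh_gt bh1_sol r1_neq0.
rewrite (scaled_res_unique lam_ge0 bh1_sol B_sol r1_neq0 rB_neq0).
rewrite -(scaled_res_transport betac hratio0 rB_neq0) w_eq.
rewrite w_eq in bh2_sol r2_neq0.
apply: (scaled_res_unique lam_ge0) => //.
- exact: (transport_is_lasso_sol lam_ge0 ht0 ht1 hratio0 hsgn hratio B_gt B_sol).
- by rewrite lasso_res_transport norm2Z gtr0_norm // mulf_eq0 negb_or gt_eqF.
Qed.
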